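(* In the procedure of obtaining a 2-swap optimal solution for $P2\|C_{\max}$ with $n$ jobs (i.e., repeatedly replacing the current schedule by an improving 2-swap neighbor), a critical machine remains critical for at most $O(n^2)$ iterations.
   Context: Problem $P2\|C_{\max}$: $n$ jobs with processing times $p_j>0$, two identical machines. A schedule $\sigma=(M_1,M_2)$ partitions the jobs into sets processed on machines 1 and 2; loads $L_i=\sum_{j\in M_i}p_j$, makespan $\max_iL_i$; a machine whose load equals the makespan is critical. A 2-swap neighbor is obtained by choosing $k'$ jobs on one machine and $k''$ on the other with $k'+k''\le2$ and interchanging their machine assignments; it is improving if its makespan is strictly smaller. A 2-swap optimal solution has no improving 2-swap neighbor. *)

From HB Require Import structures.
From mathcomp Require Import all_boot all_order all_algebra.
Set Implicit Arguments. Unset Strict Implicit. Unset Printing Implicit Defensive.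
Import Order.TTheory GRing.Theory Num.Theory.
Local Open Scope ring_scope.

(* P2||Cmax.  Jobs are 'I_n with processing times p : 'I_n -> R.
   A schedule assigns each job to one of the two machines, encoded by a bool
   (machine 1 = true, machine 2 = false). *)
Definition schedule (n : nat) := {ffun 'I_n -> bool}.

Section P2.
Variables (R : realFieldType) (n : nat) (p : 'I_n -> R).

Definition load (s : schedule n) (i : bool) : R := \sum_(j | s j == i) p j.

Definition makespan (s : schedule n) : R := Num.max (load s true) (load s false).

Definition critical (s : schedule n) (i : bool) : Prop := load s i = makespan s.

Definition two_swap_neighbor (s s' : schedule n) : Prop :=
  exists A B : {set 'I_n},
    [/\ {in A, forall j, s j = true}, {in B, forall j, s j = false},
        (#|A| + #|B| <= 2)%N &
        forall j, s' j = (if j \in A :|: B then ~~ s j else s j)].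

Definition improving_two_swap (s s' : schedule n) : Prop :=
  two_swap_neighbor s s' /\ makespan s' < makespan s.

End P2.

From HB Require Import structures.
From mathcomp Require Import all_boot all_order all_algebra.
From mathcomp Require Import zify lra.
Set Implicit Arguments. Unset Strict Implicit. Unset Printing Implicit Defensive.
Import Order.TTheory GRing.Theory Num.Theory.
Local Open Scope ring_scope.

(* Rank every job by the number of jobs that are not longer than it, and take
   as potential the total rank of the jobs on machine i; it lies in [0, n^2].
   While i stays critical, every improving 2-swap strictly lowers the load of
   i.  Such a swap moves at most two jobs, so either it only removes jobs from
   i, or it exchanges one job of i for a strictly shorter one; in both cases
   the potential of i strictly drops, hence there are at most n^2 steps. *)

Lemma big_flip_machine (T : Type) (idx : T) (op : Monoid.com_law idx) (n : nat)
    (s s' : schedule n) (D : {set 'I_n}) (i : bool) (F : 'I_n -> T) :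
  (forall j, s' j = (if j \in D then ~~ s j else s j)) ->
  op (\big[op/idx]_(j | s' j == i) F j)
     (\big[op/idx]_(j in D :&: [set j | s j == i]) F j) =
  op (\big[op/idx]_(j | s j == i) F j)
     (\big[op/idx]_(j in D :\: [set j | s j == i]) F j).
Proof.
move=> s'E.
rewrite (bigID (mem D) (fun j => s' j == i)) (bigID (mem D) (fun j => s j == i)) /=.
have -> : \big[op/idx]_(j | (s' j == i) && (j \in D)) F j =
          \big[op/idx]_(j in D :\: [set j | s j == i]) F j.
  by apply: eq_bigl => j; rewrite !inE s'E; case: (j \in D); case: (s j); case: i.
have -> : \big[op/idx]_(j | (s' j == i) && (j \notin D)) F j =
          \big[op/idx]_(j | (s j == i) && (j \notin D)) F j.
  by apply: eq_bigl => j; rewrite s'E; case: (j \in D); rewrite ?andbF ?andbT.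
have -> : \big[op/idx]_(j in D :&: [set j | s j == i]) F j =
          \big[op/idx]_(j | (s j == i) && (j \in D)) F j.
  by apply: eq_bigl => j; rewrite !inE andbC.
by rewrite Monoid.mulmAC [RHS]Monoid.mulmC Monoid.mulmA.
Qed.

Lemma leq_chain_length (f : nat -> nat) (k : nat) :
  (forall t, (t < k)%N -> (f t.+1 < f t)%N) -> (k + f k <= f 0)%N.
Proof.
elim: k => [|k IHk] f_dec //.
have := f_dec k (ltnSn k); have := IHk (fun t lt_tk => f_dec t (ltnW lt_tk)).
lia.
Qed.

Section RankPotential.
Variables (R : realFieldType) (n : nat) (p : 'I_n -> R).
Hypothesis p_gt0 : forall j, 0 < p j.

Definition rank (j : 'I_n) : nat := #|[set j' | p j' <= p j]|.

Definition potential (s : schedule n) (i : bool) : nat :=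
  (\sum_(j | s j == i) rank j)%N.

Lemma rank_gt0 j : (0 < rank j)%N.
Proof. by apply/card_gt0P; exists j; rewrite inE. Qed.

Lemma rank_le j : (rank j <= n)%N.
Proof. by rewrite /rank -[X in (_ <= X)%N]card_ord max_card. Qed.

Lemma rank_lt a b : p b < p a -> (rank b < rank a)%N.
Proof.
move=> lt_ba; apply/proper_card/properP; split.
  by apply/subsetP => j; rewrite !inE => le_jb; apply: le_trans le_jb (ltW lt_ba).
by exists a; rewrite !inE ?lexx // -ltNge.
Qed.

Lemma potential_le s i : (potential s i <= n ^ 2)%N.
Proof.
apply: (@leq_trans (\sum_(j < n) rank j)%N).
  by rewrite /potential [X in (_ <= X)%N](bigID (fun j => s j == i)) leq_addr.
apply: (@leq_trans (\sum_(j < n) n)%N); first by apply: leq_sum => j _; apply: rank_le.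
by rewrite sum_nat_const card_ord.
Qed.

Lemma rank_exchange_lt (Out In : {set 'I_n}) :
  (#|Out| + #|In| <= 2)%N -> \sum_(j in In) p j < \sum_(j in Out) p j ->
  (\sum_(j in In) rank j < \sum_(j in Out) rank j)%N.
Proof.
move=> card_le lt_InOut.
have [Out0 | [a aOut]] := set_0Vmem Out.
  have : 0 <= \sum_(j in In) p j by apply: sumr_ge0 => j _; apply: ltW.
  by rewrite Out0 big_set0 in lt_InOut; lra.
have [-> | [b bIn]] := set_0Vmem In.
  by rewrite big_set0 (bigD1 a) //=; have := rank_gt0 a; lia.
have Out_gt0 : (0 < #|Out|)%N by apply/card_gt0P; exists a.
have In_gt0 : (0 < #|In|)%N by apply/card_gt0P; exists b.
have /cards1P [a' Out1] : #|Out| == 1%N by apply/eqP; lia.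
have /cards1P [b' In1] : #|In| == 1%N by apply/eqP; lia.
rewrite Out1 In1 !big_set1 in lt_InOut *.
exact: rank_lt.
Qed.

Lemma two_swap_potential_lt i s s' :
  two_swap_neighbor s s' -> load p s' i < load p s i ->
  (potential s' i < potential s i)%N.
Proof.
case=> [A [B [_ _ card_AB s'E]]] lt_load.
have /= loadE := big_flip_machine +%R i p s'E.
have /= potE := big_flip_machine addn i rank s'E.
set Out := (A :|: B) :&: _ in loadE potE.
set In := (A :|: B) :\: _ in loadE potE.
have card_le : (#|Out| + #|In| <= 2)%N.
  by rewrite cardsID; move: card_AB; rewrite cardsU; lia.
have lt_p : \sum_(j in In) p j < \sum_(j in Out) p j by rewrite /load in lt_load; lra.
rewrite /potential -(ltn_add2r (\sum_(j in Out) rank j)) potE ltn_add2l.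
exact: rank_exchange_lt.
Qed.

End RankPotential.

Lemma improving_critical_load_lt (R : realFieldType) (n : nat) (p : 'I_n -> R)
    (s s' : schedule n) (i : bool) :
  improving_two_swap p s s' -> critical p s i -> critical p s' i ->
  load p s' i < load p s i.
Proof. by case=> _ lt_makespan -> ->. Qed.

Theorem lemma5 :
  exists C : nat,
  forall (R : realFieldType) (n : nat) (p : 'I_n -> R),
    (forall j, 0 < p j) ->
  forall (s : nat -> schedule n) (i : bool) (k : nat),
    (forall t, (t < k)%N -> improving_two_swap p (s t) (s t.+1)) ->
    (forall t, (t <= k)%N -> critical p (s t) i) ->
    (k <= C * n ^ 2)%N.
Proof.
exists 1%N => R n p p_gt0 s i k improving critical.
have potential_dec t : (t < k)%N -> (potential p (s t.+1) i < potential p (s t) i)%N.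
  move=> lt_tk; have [swap _] := improving t lt_tk.
  apply: (two_swap_potential_lt p_gt0 swap).
  exact: improving_critical_load_lt (improving t lt_tk)
           (critical t (ltnW lt_tk)) (critical t.+1 lt_tk).
have /= chain := leq_chain_length potential_dec.
rewrite mul1n (leq_trans _ (potential_le p (s 0) i)) //.
exact: leq_trans (leq_addr _ _) chain.
Qed.
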